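(* Let $m,n$ be positive integers. The chromatic polynomial of a biclique $A(\mathcal{F})$ with $|C|=n$ and $\mathcal{F}=(F_1,\ldots,F_m)$ is determined by $n$ and the numbers $\left|\bigcap_{i\in I}F_i\right|$ for the nonempty subsets $I\subseteq\{1,\ldots,m\}$. That is, if $\mathcal{F}=(F_1,\ldots,F_m)$ is a family of subsets of an $n$-set $C$ and $\mathcal{F}'=(F'_1,\ldots,F'_m)$ is a family of subsets of an $n$-set $C'$ such that $\left|\bigcap_{i\in I}F_i\right|=\left|\bigcap_{i\in I}F'_i\right|$ for every nonempty $I\subseteq\{1,\ldots,m\}$, then $A(\mathcal{F})$ and $A(\mathcal{F}')$ have the same chromatic polynomial.
   Context: Given an $n$-element set $C$ and a sequence $\mathcal{F}=(F_1,\ldots,F_m)$ of subsets of $C$, the biclique $A(\mathcal{F})$ is the simple graph with vertex set $C\cup D$, where $D=\{w_1,\ldots,w_m\}$ is disjoint from $C$, in which $C$ and $D$ each induce complete graphs and, for each $i$, the neighbours of $w_i$ in $C$ are exactly the vertices of $F_i$. The chromatic polynomial $P_G(q)$ of a graph $G$ is the polynomial whose value at each positive integer $q$ is the number of proper colourings of $G$ with $q$ colours. *)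

From mathcomp Require Import all_boot all_order.
Set Implicit Arguments. Unset Strict Implicit. Unset Printing Implicit Defensive.

(* Adjacency of the biclique A(F): vertex set C + 'I_m (inl = vertices of C,
   inr i = w_i); C and D are cliques, and w_i ~ x iff x \in F i. *)
Definition biclique_adj (C : finType) (m : nat) (F : 'I_m -> {set C})
  (u v : C + 'I_m) : bool :=
  match u, v with
  | inl x, inl y => x != y
  | inr i, inr j => i != j
  | inl x, inr i => x \in F i
  | inr i, inl x => x \in F i
  end.

Definition proper_colouring (V : finType) (e : rel V) (q : nat)
  (f : {ffun V -> 'I_q}) : bool :=
  [forall u, forall v, e u v ==> (f u != f v)].

Definition chrom_count (V : finType) (e : rel V) (q : nat) : nat :=
  #|[set f : {ffun V -> 'I_q} | proper_colouring e f]|.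

(* Two graphs have the same chromatic polynomial iff the polynomials agree at
   every positive integer (infinitely many points). *)
Definition same_chromatic_polynomial (V V' : finType) (e : rel V) (e' : rel V')
  : Prop := forall q : nat, 0 < q -> chrom_count e q = chrom_count e' q.

From mathcomp Require Import all_boot all_order.
Set Implicit Arguments. Unset Strict Implicit. Unset Printing Implicit Defensive.

(* The bicliques are in fact isomorphic.  Record for each vertex x of C its
   incidence set {i | x \in F i}; the hypothesis says how many vertices have
   an incidence set containing a given nonempty I, and, with |C| = n, also for
   I empty.  Inclusion-exclusion (an induction on the co-size of I) then
   gives how many vertices have incidence set exactly I.  Matching up these
   equal-sized classes gives a bijection C -> C' preserving incidence sets,
   which extends by the identity on D to an isomorphism A(F) ~ A(F'). *)

Section ChromCountIso.

Variables (V V' : finType) (e : rel V) (e' : rel V') (t : V -> V').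
Hypotheses (t_bij : bijective t) (t_adj : forall u v, e u v = e' (t u) (t v)).

Lemma proper_colouring_comp q (f : {ffun V' -> 'I_q}) :
  proper_colouring e [ffun v => f (t v)] = proper_colouring e' f.
Proof.
have [s tK sK] := t_bij.
apply/forallP/forallP => f_prop u.
  apply/forallP => v; apply/implyP; rewrite -(sK u) -(sK v) -t_adj => euv.
  by have /forallP/(_ (s v))/implyP := f_prop (s u); rewrite !ffunE; apply.
apply/forallP => v; apply/implyP; rewrite t_adj !ffunE => euv.
by have /forallP/(_ (t v))/implyP := f_prop (t u); apply.
Qed.

Lemma chrom_count_iso q : chrom_count e q = chrom_count e' q.
Proof.
apply/esym.
pose comp_t (f : {ffun V' -> 'I_q}) : {ffun V -> 'I_q} := [ffun v => f (t v)].
have [s tK sK] := t_bij.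
pose comp_s (g : {ffun V -> 'I_q}) : {ffun V' -> 'I_q} := [ffun v' => g (s v')].
have comp_tK : cancel comp_t comp_s.
  by move=> f; apply/ffunP => v'; rewrite !ffunE sK.
rewrite /chrom_count -(card_imset _ (can_inj comp_tK)); apply: eq_card => g.
have comp_sK : cancel comp_s comp_t.
  by move=> g'; apply/ffunP => v; rewrite !ffunE tK.
have comp_t_prop f : proper_colouring e (comp_t f) = proper_colouring e' f.
  exact: proper_colouring_comp.
rewrite inE; apply/imsetP/idP => [[f f_prop ->]|g_prop].
  by rewrite inE in f_prop; rewrite comp_t_prop.
exists (comp_s g); last by rewrite comp_sK.
by rewrite inE -comp_t_prop comp_sK.
Qed.

End ChromCountIso.

Section FibreInversion.

Variable I : finType.

Lemma card_superset_fibres (T : finType) (g : T -> {set I}) (S : {set I}) :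
  #|[set x | S \subset g x]| = \sum_(R : {set I} | S \subset R) #|[set x | g x == R]|.
Proof.
rewrite -sum1_card (partition_big g (fun R : {set I} => S \subset R)) => [|x]; last first.
  by rewrite inE.
apply: eq_bigr => R sSR; rewrite -sum1_card; apply: eq_bigl => x.
by rewrite !inE; case: eqP => [->|]; rewrite ?sSR ?andbF.
Qed.

Lemma eq_card_fibres (T T' : finType) (g : T -> {set I}) (g' : T' -> {set I}) :
  (forall S : {set I}, #|[set x | S \subset g x]| = #|[set x | S \subset g' x]|) ->
  forall R : {set I}, #|[set x | g x == R]| = #|[set x | g' x == R]|.
Proof.
move=> eq_sup R; have [k] := ubnP #|~: R|; elim: k R => // k IHk R ltRk.
have := eq_sup R; rewrite !card_superset_fibres (bigD1 R) // [in RHS](bigD1 R) //=.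
suff -> : \sum_(R' : {set I} | (R \subset R') && (R' != R)) #|[set x | g x == R']| =
          \sum_(R' : {set I} | (R \subset R') && (R' != R)) #|[set x | g' x == R']|.
  by move/addIn.
apply: eq_bigr => R' /andP[sRR' neR'R]; apply: IHk.
have ltR'R : #|~: R'| < #|~: R|.
  by apply/proper_card; rewrite properC properEneq eq_sym neR'R.
exact: leq_trans ltR'R ltRk.
Qed.

End FibreInversion.

Lemma fibre_matching (T T' : finType) (A : eqType) (f : T -> A) (f' : T' -> A)
    (y0 : T') :
  (forall a, #|[set x | f x == a]| = #|[set y | f' y == a]|) ->
  exists2 sg : T -> T', injective sg & forall x, f' (sg x) = f x.
Proof.
move=> eq_fibres.
pose fibre a := enum [set x | f x == a]; pose fibre' a := enum [set y | f' y == a].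
have in_fibre x : x \in fibre (f x) by rewrite mem_enum inE.
have lt_index x : index x (fibre (f x)) < size (fibre' (f x)).
  by rewrite -!cardE -eq_fibres cardE index_mem.
pose sg x := nth y0 (fibre' (f x)) (index x (fibre (f x))).
have sg_fibre x : f' (sg x) = f x.
  by have := mem_nth y0 (lt_index x); rewrite mem_enum inE => /eqP.
exists sg => // x1 x2 eq_sg.
have eq_f : f x1 = f x2 by rewrite -!sg_fibre eq_sg.
move: eq_sg; rewrite /sg eq_f => /eqP; rewrite nth_uniq ?enum_uniq //; last first.
  by have := lt_index x1; rewrite eq_f.
have x1_in : x1 \in fibre (f x2) by rewrite -eq_f in_fibre.
by move/eqP/(congr1 (nth x2 (fibre (f x2)))); rewrite !nth_index ?in_fibre.
Qed.

Definition incidence (C : finType) m (F : 'I_m -> {set C}) (x : C) : {set 'I_m} :=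
  [set i | x \in F i].

Lemma mem_incidence (C : finType) m (F : 'I_m -> {set C}) x i :
  (i \in incidence F x) = (x \in F i).
Proof. by rewrite inE. Qed.

Lemma bigcap_incidence (C : finType) m (F : 'I_m -> {set C}) (S : {set 'I_m}) :
  \bigcap_(i in S) F i = [set x | S \subset incidence F x].
Proof.
apply/setP => x; rewrite inE; apply/bigcapP/subsetP => [x_in i iS|sS i iS].
  by rewrite inE x_in.
by have := sS i iS; rewrite inE.
Qed.

Definition lift_inl (C C' I : Type) (sg : C -> C') (u : C + I) : C' + I :=
  match u with inl x => inl (sg x) | inr i => inr i end.

Lemma lift_inl_bij (C C' I : Type) (sg : C -> C') :
  bijective sg -> bijective (@lift_inl C C' I sg).
Proof.
by case=> sg' sgK sgK'; exists (lift_inl sg') => [] [x|i] //=; rewrite ?sgK ?sgK'.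
Qed.

Lemma biclique_adj_lift (C C' : finType) m
    (F : 'I_m -> {set C}) (F' : 'I_m -> {set C'}) (sg : C -> C') :
  injective sg -> (forall x, incidence F' (sg x) = incidence F x) ->
  forall u v, biclique_adj F u v = biclique_adj F' (lift_inl sg u) (lift_inl sg v).
Proof.
move=> sg_inj sg_inc [x|i] [y|j] //=; rewrite ?(inj_eq sg_inj) //.
  by rewrite -!mem_incidence sg_inc.
by rewrite -!mem_incidence sg_inc.
Qed.

Theorem proposition3 (m n : nat) (hm : 0 < m) (hn : 0 < n)
  (C C' : finType) (hC : #|C| = n) (hC' : #|C'| = n)
  (F : 'I_m -> {set C}) (F' : 'I_m -> {set C'}) :
  (forall I : {set 'I_m}, I != set0 ->
     #|\bigcap_(i in I) F i| = #|\bigcap_(i in I) F' i|) ->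
  same_chromatic_polynomial (biclique_adj F) (biclique_adj F').
Proof.
move=> eq_bigcap q _.
have eq_sup (S : {set 'I_m}) :
    #|[set x | S \subset incidence F x]| = #|[set x | S \subset incidence F' x]|.
  rewrite -(bigcap_incidence F) -(bigcap_incidence F').
  have [->|/eq_bigcap //] := eqVneq S set0.
  by rewrite !big_set0 !cardsT hC hC'.
have [x0' _] : exists x0' : C', true by apply/card_gt0P; rewrite hC'.
have [sg sg_inj sg_inc] := fibre_matching x0' (eq_card_fibres eq_sup).
have sg_bij : bijective sg by apply: inj_card_bij sg_inj _; rewrite hC hC'.
apply: (chrom_count_iso (lift_inl_bij _ sg_bij)).
exact: biclique_adj_lift.
Qed.
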